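(* Let $i\in\{1,\ldots,n\}$ and suppose that for every $j\in\{1,\ldots,i\}$ the implication $$\hat F(\mathbf{1}^j,\mathbf{X}_{j+1}^n,\mathbf{1}^j,\overline{\mathbf{X}}_{j+1}^n,\mathbf{Y})\Rightarrow \hat F(\mathbf{1}^{j-1}0,\mathbf{X}_{j+1}^n,\mathbf{1}^{j-1}1,\overline{\mathbf{X}}_{j+1}^n,\mathbf{Y})\vee \hat F(\mathbf{1}^{j-1}1,\mathbf{X}_{j+1}^n,\mathbf{1}^{j-1}0,\overline{\mathbf{X}}_{j+1}^n,\mathbf{Y})$$ is valid (for all values of $\mathbf{X}_{j+1}^n,\overline{\mathbf{X}}_{j+1}^n,\mathbf{Y}$). Then $\exists\mathbf{X}_1^i\,F(\mathbf{X},\mathbf{Y})\Leftrightarrow \hat F(\mathbf{1}^i,\mathbf{X}_{i+1}^n,\mathbf{1}^i,\neg\mathbf{X}_{i+1}^n,\mathbf{Y})$.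
   Context: $\mathbf{X}=(x_1,\ldots,x_n)$ are outputs and $\mathbf{Y}=(y_1,\ldots,y_m)$ inputs; $\mathbf{X}_i^j=(x_i,\ldots,x_j)$. An NNF formula uses only $\wedge,\vee$ and negations applied to variables, represented as a DAG with $\wedge/\vee$ internal nodes and literal leaves. Given a fixed NNF DAG for $F(\mathbf{X},\mathbf{Y})$, $\hat F(\mathbf{X},\overline{\mathbf{X}},\mathbf{Y})$ is obtained by replacing each leaf $\neg x_i$ ($x_i\in\mathbf{X}$) by a fresh variable $\overline{x_i}$, $\overline{\mathbf{X}}=(\overline{x_1},\ldots,\overline{x_n})$. For bit-vectors $\mathbf{b},\mathbf{c}$ of length $j$, $\hat F(\mathbf{b},\mathbf{X}_{j+1}^n,\mathbf{c},\overline{\mathbf{X}}_{j+1}^n,\mathbf{Y})$ denotes $\hat F$ with $(x_1,\ldots,x_j):=\mathbf{b}$ and $(\overline{x_1},\ldots,\overline{x_j}):=\mathbf{c}$; writing $\neg\mathbf{X}_{j+1}^n$ in place of $\overline{\mathbf{X}}_{j+1}^n$ means $\overline{x_k}:=\neg x_k$ for $k>j$. $\mathbf{1}^{j-1}0$ is the length-$j$ vector with $j-1$ ones followed by a $0$ (similarly $\mathbf{1}^{j-1}1=\mathbf{1}^j$), and $\mathbf{1}^j$ the all-ones vector of length $j$. *)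

From mathcomp Require Import all_boot.
Set Implicit Arguments. Unset Strict Implicit. Unset Printing Implicit Defensive.

(* NNF formulas over outputs x_0..x_{n-1} ('I_n) and inputs y_0..y_{m-1} ('I_m).
   A DAG is represented by its unfolding into a tree (same semantics). *)
Inductive nnf (n m : nat) : Type :=
| NConst of bool
| NPosX of 'I_n
| NNegX of 'I_n
| NPosY of 'I_m
| NNegY of 'I_m
| NAnd of nnf n m & nnf n m
| NOr of nnf n m & nnf n m.

Fixpoint eval_nnf n m (F : nnf n m) (x : 'I_n -> bool) (y : 'I_m -> bool) : bool :=
  match F with
  | NConst b => b
  | NPosX i => x i
  | NNegX i => ~~ x i
  | NPosY k => y k
  | NNegY k => ~~ y k
  | NAnd f g => eval_nnf f x y && eval_nnf g x y
  | NOr f g => eval_nnf f x y || eval_nnf g x y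
  end.

(* Semantics of Fhat(X, Xbar, Y): each leaf ~x_i is replaced by the fresh variable xbar_i. *)
Fixpoint eval_hat n m (F : nnf n m) (x xb : 'I_n -> bool) (y : 'I_m -> bool) : bool :=
  match F with
  | NConst b => b
  | NPosX i => x i
  | NNegX i => xb i
  | NPosY k => y k
  | NNegY k => ~~ y k
  | NAnd f g => eval_hat f x xb y && eval_hat g x xb y
  | NOr f g => eval_hat f x xb y || eval_hat g x xb y
  end.

(* override j p x : the first j coordinates (0-based indices k < j, i.e. x_1..x_j
   in the paper's 1-based numbering) are set to p k, the rest taken from x. *)
Definition override n (j : nat) (p : nat -> bool) (x : 'I_n -> bool) : 'I_n -> bool :=
  fun k => if (k < j)%N then p k else x k.

Definition ones : nat -> bool := fun _ => true.

(* The length-j prefix 1^{j-1} b (last position, index j-1, equals b). *)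
Definition ones_last (j : nat) (b : bool) : nat -> bool :=
  fun k => if k == j.-1 then b else true.

From mathcomp Require Import all_boot.

Set Implicit Arguments.
Unset Strict Implicit.
Unset Printing Implicit Defensive.

(* Since [F] is in NNF, [eval_hat F] is monotone in both the positive and the
   negated copies of the outputs, and [F(x)] is [Fhat(x, ~x)]; so relaxing a
   prefix to the pair (1, 1) preserves truth, which gives one direction.
   Conversely, at level [j+1] the hypothesis resolves the relaxed position
   [j+1] into a consistent pair (0, 1) or (1, 0), i.e. into a level-[j]
   relaxation of [x] updated at that position; induction on [j] removes all
   relaxed positions and yields a genuine model of [F]. *)

Lemma eval_hat_mono n m (F : nnf n m) (x x' xb xb' : 'I_n -> bool) y :
  (forall k, x k -> x' k) -> (forall k, xb k -> xb' k) ->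
  eval_hat F x xb y -> eval_hat F x' xb' y.
Proof.
move=> le_x le_xb; elim: F => //= [f IHf g IHg|f IHf g IHg].
- by case/andP=> /IHf-> /IHg->.
- by case/orP=> [/IHf|/IHg]->; rewrite ?orbT.
Qed.

Lemma eq_eval_hat n m (F : nnf n m) (x x' xb xb' : 'I_n -> bool) y :
  x =1 x' -> xb =1 xb' -> eval_hat F x xb y = eval_hat F x' xb' y.
Proof.
move=> eq_x eq_xb; apply/idP/idP; apply: eval_hat_mono => k;
  by rewrite ?eq_x ?eq_xb.
Qed.

Lemma eval_nnf_hat n m (F : nnf n m) x y :
  eval_nnf F x y = eval_hat F x (fun k => ~~ x k) y.
Proof. by elim: F => //= f -> g ->. Qed.

Lemma override_ones_last n j b (x : 'I_n -> bool) :
  override j.+1 (ones_last j.+1 b) x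
  =1 override j ones (fun k : 'I_n => if k == j :> nat then b else x k).
Proof.
move=> k; rewrite /override /ones_last /ones ltnS leq_eqVlt.
by case: ltngtP.
Qed.

Lemma eval_hat_override_ones n m (F : nnf n m) j (x : 'I_n -> bool) y :
  eval_nnf F x y ->
  eval_hat F (override j ones x) (override j ones (fun k => ~~ x k)) y.
Proof.
by rewrite eval_nnf_hat; apply: eval_hat_mono => k; rewrite /override; case: ifP.
Qed.

Section Descent.

Variables (n m : nat) (F : nnf n m) (y : 'I_m -> bool) (i : nat).

Hypothesis split_relaxed : forall j, (1 <= j <= i)%N -> forall x xb : 'I_n -> bool,
  eval_hat F (override j ones x) (override j ones xb) y ->
  eval_hat F (override j (ones_last j false) x) (override j (ones_last j true) xb) y
  || eval_hat F (override j (ones_last j true) x) (override j (ones_last j false) xb) y.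

Lemma eval_hat_override_ones_last j (b : bool) (x : 'I_n -> bool) :
  let u (k : 'I_n) := if k == j :> nat then b else x k in
  eval_hat F (override j.+1 (ones_last j.+1 b) x)
             (override j.+1 (ones_last j.+1 (~~ b)) (fun k => ~~ x k)) y =
  eval_hat F (override j ones u) (override j ones (fun k => ~~ u k)) y.
Proof.
apply: eq_eval_hat => k; rewrite override_ones_last //.
by rewrite /override; case: ifP => //; case: eqP.
Qed.

Lemma relaxed_prefix_model j : (j <= i)%N -> forall x : 'I_n -> bool,
  eval_hat F (override j ones x) (override j ones (fun k => ~~ x k)) y ->
  exists2 x' : 'I_n -> bool,
    forall k : 'I_n, (j <= k)%N -> x' k = x k & eval_nnf F x' y.
Proof.
elim: j => [|j IHj] le_ji x Fx.
  by exists x => //; rewrite eval_nnf_hat; apply: eval_hat_mono Fx.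
have resolve b : eval_hat F (override j.+1 (ones_last j.+1 b) x)
    (override j.+1 (ones_last j.+1 (~~ b)) (fun k => ~~ x k)) y ->
  exists2 x' : 'I_n -> bool,
    forall k : 'I_n, (j.+1 <= k)%N -> x' k = x k & eval_nnf F x' y.
  rewrite eval_hat_override_ones_last => /(IHj (ltnW le_ji))[x' eq_x' Fx'].
  by exists x' => // k lt_jk; rewrite eq_x' ?(ltnW lt_jk) ?gtn_eqF.
by case/orP: (split_relaxed (j := j.+1) le_ji Fx) => [/(resolve false)|/(resolve true)].
Qed.

End Descent.

Theorem theorem2 (n m : nat) (F : nnf n m) (i : nat) :
  (1 <= i <= n)%N ->
  (forall j : nat, (1 <= j <= i)%N ->
     forall (x xb : 'I_n -> bool) (y : 'I_m -> bool),
       eval_hat F (override j ones x) (override j ones xb) y ->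
       eval_hat F (override j (ones_last j false) x) (override j (ones_last j true) xb) y
       || eval_hat F (override j (ones_last j true) x) (override j (ones_last j false) xb) y) ->
  forall (x : 'I_n -> bool) (y : 'I_m -> bool),
    (exists x' : 'I_n -> bool,
        (forall k : 'I_n, (i <= k)%N -> x' k = x k) /\ eval_nnf F x' y)
    <->
    eval_hat F (override i ones x) (override i ones (fun k => ~~ x k)) y.
Proof.
move=> _ split_relaxed x y; split.
- move=> [x' [eq_x' /(eval_hat_override_ones i)]]; apply: eval_hat_mono => k;
    by rewrite /override; case: ltnP => // le_ik; rewrite eq_x'.
- case/(relaxed_prefix_model (fun j hj x xb => split_relaxed j hj x xb y) (leqnn i)).
  by move=> x' eq_x' Fx'; exists x'.
Qed.
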